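(* Let $f_1,\dots,f_n$ satisfy Assumption A1 and let $R:=\mathrm{diam}(\mathrm{Pareto}(F))$. Then for any $\beta\in\Delta^{n-1}$ and $x_\beta=x^*(\beta)$, \[\|\nabla F(x_\beta)^\top\|_{1,2}\le LR.\]
   Context: Assumption A1: each $f_i:\mathbb{R}^d\to\mathbb{R}$ is twice differentiable with $\mu\mathbf{I}\preceq\nabla^2 f_i\preceq L\mathbf{I}$, $0<\mu\le L$. $F=(f_1,\dots,f_n)$, $\nabla F(x)\in\mathbb{R}^{n\times d}$ its Jacobian (rows $\nabla f_i(x)^\top$), $\Delta^{n-1}$ the simplex, $x^*(\beta)=x_\beta=\operatorname{argmin}_x\sum_i\beta_if_i(x)$. $\mathrm{Pareto}(F)$ is the set of Pareto optimal points (equivalently $x$ with $\sum_i\beta_i\nabla f_i(x)=0$ for some $\beta\in\Delta^{n-1}$), diameter in $\ell_2$. $\|A\|_{1,2}:=\sup_{\|z\|_1=1}\|Az\|_2$. *)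

From HB Require Import structures.
From mathcomp Require Import all_boot all_order all_algebra.
From mathcomp Require Import all_classical all_reals all_analysis.
Set Implicit Arguments. Unset Strict Implicit. Unset Printing Implicit Defensive.
Import Order.TTheory GRing.Theory Num.Theory.
Import numFieldNormedType.Exports.
Local Open Scope classical_set_scope.
Local Open Scope ring_scope.

Section Defs.
Variable R : realType.

Definition enorm (m k : nat) (A : 'M[R]_(m, k)) : R :=
  Num.sqrt (\sum_(i < m) \sum_(j < k) A i j ^+ 2).

Definition l1norm (n : nat) (z : 'cV[R]_n) : R := \sum_(i < n) `|z i 0|.

Definition grad (d : nat) (f : 'rV[R]_d -> R) (x : 'rV[R]_d) : 'rV[R]_d :=
  \row_(j < d) 'D_(delta_mx 0 j) f x.

Definition hess (d : nat) (f : 'rV[R]_d -> R) (x : 'rV[R]_d) : 'M[R]_d :=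
  \matrix_(i < d, j < d) 'D_(delta_mx 0 j) (fun y => grad f y 0 i) x.

Definition assumptionA1 (d : nat) (mu L : R) (f : 'rV[R]_d -> R) : Prop :=
  [/\ 0 < mu, mu <= L,
      (forall x, differentiable f x),
      (forall x, differentiable (grad f) x) &
      (forall x (v : 'rV[R]_d),
          mu * enorm v ^+ 2 <= (v *m hess f x *m v^T) 0 0 /\
          (v *m hess f x *m v^T) 0 0 <= L * enorm v ^+ 2)].

Definition jac (n d : nat) (F : 'I_n -> 'rV[R]_d -> R) (x : 'rV[R]_d) : 'M[R]_(n, d) :=
  \matrix_(i < n, j < d) grad (F i) x 0 j.

Definition norm12 (d n : nat) (A : 'M[R]_(d, n)) : \bar R :=
  ereal_sup [set (enorm (A *m z))%:E | z in [set z : 'cV[R]_n | l1norm z = 1]].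

Definition pareto_optimal (n d : nat) (F : 'I_n -> 'rV[R]_d -> R) (x : 'rV[R]_d) : Prop :=
  ~ (exists y, (forall i, F i y <= F i x) /\ (exists j, F j y < F j x)).

Definition pareto_set (n d : nat) (F : 'I_n -> 'rV[R]_d -> R) : set 'rV[R]_d :=
  [set x | pareto_optimal F x].

Definition diam (d : nat) (S : set 'rV[R]_d) : \bar R :=
  ereal_sup [set r | exists x y, S x /\ S y /\ r = (enorm (x - y))%:E].

Definition in_simplex (n : nat) (beta : 'I_n -> R) : Prop :=
  (forall i, 0 <= beta i) /\ \sum_(i < n) beta i = 1.

End Defs.

From HB Require Import structures.
From mathcomp Require Import all_boot all_order all_algebra.
From mathcomp Require Import all_classical all_reals all_analysis.
From mathcomp Require Import ring lra.
Import Order.TTheory GRing.Theory Num.Theory.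
Import numFieldNormedType.Exports.
Local Open Scope classical_set_scope.
Local Open Scope ring_scope.

Set Implicit Arguments. Unset Strict Implicit.

(* These bounds
   make each f_i, and every convex combination of them, strongly convex with an
   L-cocoercive gradient.  Hence f_i has a unique minimiser p_i, which is Pareto
   optimal, and so is x_beta, the unique minimiser of sum_i beta_i f_i.
   Cocoercivity together with grad f_i (p_i) = 0 gives
   |grad f_i (x_beta)| <= L |x_beta - p_i| <= L R, and
   grad F(x_beta)^T z = sum_i z_i grad f_i (x_beta) has norm at most L R |z|_1. *)

Section SecondOrder.
Variable R : realType.

Lemma tangent_le_of_derive2_ge0 (f f1 f2 : R -> R) :
  (forall t, is_derive t (1 : R) f (f1 t)) ->
  (forall t, is_derive t (1 : R) f1 (f2 t)) ->
  (forall t, 0 <= f2 t) -> f 0 + f1 0 <= f 1.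
Proof.
move=> Df Df1 f2_ge0.
have cont (g g' : R -> R) (Dg : forall t, is_derive t (1 : R) g (g' t)) a b :
    {within `[a, b], continuous g}.
  by apply: derivable_within_continuous => t _; case: (Dg t).
have [c c01 Ef] := MVT_segment ler01 (fun t _ => Df t) (cont _ _ Df 0 1).
have c_ge0 : 0 <= c by move: c01; rewrite in_itv /= => /andP[].
have [e _ Ef1] := MVT_segment c_ge0 (fun t _ => Df1 t) (cont _ _ Df1 0 c).
have : 0 <= f1 c - f1 0 by rewrite Ef1 mulr_ge0 // subr_ge0.
by move: Ef; rewrite subr0 mulr1; lra.
Qed.

Lemma taylor2_ge (f f1 f2 : R -> R) a :
  (forall t, is_derive t (1 : R) f (f1 t)) ->
  (forall t, is_derive t (1 : R) f1 (f2 t)) ->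
  (forall t, a <= f2 t) -> f 0 + f1 0 + a / 2 <= f 1.
Proof.
move=> Df Df1 f2_ge.
pose g t := f t - a / 2 * t ^+ 2.
pose g1 t := f1 t - a * t.
have Dg t : is_derive t (1 : R) g (g1 t).
  apply: is_derive_eq.
  by rewrite /g1 /GRing.scale /= mulr1; field.
have Dg1 t : is_derive t (1 : R) g1 (f2 t - a).
  by apply: is_derive_eq; rewrite /GRing.scale /= mulr1.
have Dg1_ge0 t : 0 <= f2 t - a by rewrite subr_ge0.
have := tangent_le_of_derive2_ge0 Dg Dg1 Dg1_ge0.
rewrite /g /g1 expr0n expr1n /=; lra.
Qed.

Lemma taylor2_le (f f1 f2 : R -> R) b :
  (forall t, is_derive t (1 : R) f (f1 t)) ->
  (forall t, is_derive t (1 : R) f1 (f2 t)) ->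
  (forall t, f2 t <= b) -> f 1 <= f 0 + f1 0 + b / 2.
Proof.
move=> Df Df1 f2_le.
have f2N_ge t : - b <= - f2 t by rewrite lerN2.
have := taylor2_ge (fun t => is_deriveN (Df t)) (fun t => is_deriveN (Df1 t)) f2N_ge.
rewrite !fctE; lra.
Qed.

End SecondOrder.

Section InnerProduct.
Variables (R : realType) (m k : nat).
Implicit Types A B C : 'M[R]_(m, k).

Definition dotmx A B := \sum_(i < m) \sum_(j < k) A i j * B i j.

Lemma dotmxC A B : dotmx A B = dotmx B A.
Proof. by apply: eq_bigr => i _; apply: eq_bigr => j _; rewrite mulrC. Qed.

Lemma dotmxDl A B C : dotmx (A + B) C = dotmx A C + dotmx B C.
Proof.
rewrite /dotmx -big_split; apply: eq_bigr => i _.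
by rewrite -big_split; apply: eq_bigr => j _; rewrite mxE mulrDl.
Qed.

Lemma dotmxZl a A B : dotmx (a *: A) B = a * dotmx A B.
Proof.
rewrite /dotmx mulr_sumr; apply: eq_bigr => i _.
by rewrite mulr_sumr; apply: eq_bigr => j _; rewrite mxE mulrA.
Qed.

Lemma dotmxNl A B : dotmx (- A) B = - dotmx A B.
Proof. by rewrite -scaleN1r dotmxZl mulN1r. Qed.

Lemma dotmxBl A B C : dotmx (A - B) C = dotmx A C - dotmx B C.
Proof. by rewrite dotmxDl dotmxNl. Qed.

Lemma dotmx0l A : dotmx 0 A = 0.
Proof. by rewrite -(scale0r 0) dotmxZl mul0r. Qed.

Lemma dotmxDr A B C : dotmx A (B + C) = dotmx A B + dotmx A C.
Proof. by rewrite dotmxC dotmxDl !(dotmxC A). Qed.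

Lemma dotmxZr a A B : dotmx A (a *: B) = a * dotmx A B.
Proof. by rewrite dotmxC dotmxZl dotmxC. Qed.

Lemma dotmxNr A B : dotmx A (- B) = - dotmx A B.
Proof. by rewrite dotmxC dotmxNl dotmxC. Qed.

Lemma dotmxBr A B C : dotmx A (B - C) = dotmx A B - dotmx A C.
Proof. by rewrite dotmxDr dotmxNr. Qed.

Lemma dotmx_ge0 A : 0 <= dotmx A A.
Proof. by do 2![apply: sumr_ge0 => ? _]; rewrite -expr2 sqr_ge0. Qed.

Lemma dotmx_eq0 A : dotmx A A = 0 -> A = 0.
Proof.
have sq_ge0 i j : 0 <= A i j * A i j by rewrite -expr2 sqr_ge0.
move=> /(psumr_eq0P (fun i _ => sumr_ge0 _ (fun j _ => sq_ge0 i j))) row0.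
apply/matrixP => i j; move/(psumr_eq0P (fun j _ => sq_ge0 i j)): (row0 i isT).
by move=> /(_ j isT) /eqP; rewrite mxE mulf_eq0 orbb => /eqP.
Qed.

Lemma enormE A : enorm A = Num.sqrt (dotmx A A).
Proof.
by congr Num.sqrt; apply: eq_bigr => i _; apply: eq_bigr => j _; rewrite expr2.
Qed.

Lemma enorm_sqr A : enorm A ^+ 2 = dotmx A A.
Proof. by rewrite enormE sqr_sqrtr ?dotmx_ge0. Qed.

Lemma enorm_ge0 A : 0 <= enorm A.
Proof. exact: sqrtr_ge0. Qed.

Lemma enorm_eq0 A : enorm A = 0 -> A = 0.
Proof. by move=> A0; apply: dotmx_eq0; rewrite -enorm_sqr A0 expr0n. Qed.

Lemma enorm_gt0 A : A != 0 -> 0 < enorm A.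
Proof.
move=> A0; rewrite lt_def enorm_ge0 andbT.
by apply: contraNneq A0 => /enorm_eq0 ->.
Qed.

Lemma enorm0 : enorm (0 : 'M[R]_(m, k)) = 0.
Proof.
by rewrite /enorm big1 ?sqrtr0 // => i _; rewrite big1 // => j _; rewrite mxE expr0n.
Qed.

Lemma enormZ a A : enorm (a *: A) = `|a| * enorm A.
Proof.
by rewrite !enormE dotmxZl dotmxZr mulrA -expr2 sqrtrM ?sqr_ge0 // sqrtr_sqr.
Qed.

Lemma enorm_sqrZ a A : enorm (a *: A) ^+ 2 = a ^+ 2 * enorm A ^+ 2.
Proof. by rewrite enormZ exprMn real_normK // num_real. Qed.

Lemma enormN A : enorm (- A) = enorm A.
Proof. by rewrite -scaleN1r enormZ normrN1 mul1r. Qed.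

Lemma dotmx_le A B : dotmx A B <= enorm A * enorm B.
Proof.
have [->|A0] := eqVneq A 0; first by rewrite dotmx0l enorm0 mul0r.
have [->|B0] := eqVneq B 0; first by rewrite dotmxC dotmx0l enorm0 mulr0.
have a_gt0 := enorm_gt0 A0; have b_gt0 := enorm_gt0 B0.
have := dotmx_ge0 (enorm B *: A - enorm A *: B).
rewrite !dotmxBl !dotmxBr !dotmxZl !dotmxZr -!enorm_sqr (dotmxC B A).
set a := enorm A; set b := enorm B; set c := dotmx A B => h.
have ab_gt0 : 0 < a * b by rewrite mulr_gt0.
by rewrite -(ler_pM2l ab_gt0); nra.
Qed.

Lemma enormD A B : enorm (A + B) <= enorm A + enorm B.
Proof.
rewrite -ler_sqr ?nnegrE ?addr_ge0 ?enorm_ge0 //.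
rewrite enorm_sqr dotmxDl !dotmxDr (dotmxC B A) sqrrD -!enorm_sqr.
by have := dotmx_le A B; lra.
Qed.

Lemma normr_le_enorm A : `|A| <= enorm A.
Proof.
rewrite [leLHS]/Num.norm /= mx_normrE; apply: bigmax_le => [|[i j] _] /=.
  exact: enorm_ge0.
rewrite -(sqrtr_sqr (A i j)) ler_sqrt; last first.
  by do 2![apply: sumr_ge0 => ? _]; rewrite sqr_ge0.
rewrite (bigD1 i) //= (bigD1 j) //= -addrA lerDl addr_ge0 //.
  by apply: sumr_ge0 => ? _; rewrite sqr_ge0.
by apply: sumr_ge0 => ? _; apply: sumr_ge0 => ? _; rewrite sqr_ge0.
Qed.

Lemma enorm_sum_le n (c : 'I_n -> R) (A : 'I_n -> 'M[R]_(m, k)) :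
  enorm (\sum_(i < n) c i *: A i) <= \sum_(i < n) `|c i| * enorm (A i).
Proof.
apply: (big_rec2 (fun B r => enorm B <= r)); first by rewrite enorm0.
by move=> i B r _ le_Br; apply: le_trans (enormD _ _) _; rewrite enormZ lerD2l.
Qed.

End InnerProduct.

Lemma enorm_trmx (R : realType) m k (A : 'M[R]_(m, k)) : enorm A^T = enorm A.
Proof.
rewrite /enorm exchange_big; congr Num.sqrt.
by apply: eq_bigr => i _; apply: eq_bigr => j _; rewrite mxE.
Qed.

Section Expansion.
Variables (R : realType) (d : nat).

Lemma is_derive_line (V : normedModType R) (h : V -> R) (x v : V) (t : R) :
  derivable h (x + t *: v) v ->
  is_derive t (1 : R) (fun s => h (x + s *: v)) ('D_v h (x + t *: v)).
Proof.
move=> dh.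
have E : (fun s : R => s^-1 *: (((fun s => h (x + s *: v)) \o shift t) (s *: 1)
                                 - h (x + t *: v))) =
         (fun s : R => s^-1 *: ((h \o shift (x + t *: v)) (s *: v) - h (x + t *: v))).
  apply/funext => s /=; rewrite /shift /=; congr (_ *: (h _ - _)).
  by rewrite scalerDl addrCA; congr (_ *: _ + _); exact: mulr1.
by split; rewrite /derivable /derive E.
Qed.

Lemma derive_grad (h : 'rV[R]_d -> R) (y w : 'rV[R]_d) :
  differentiable h y -> 'D_w h y = dotmx (grad h y) w.
Proof.
move=> dh; rewrite deriveE // {1}(row_sum_delta w) linear_sum /dotmx big_ord1.
by apply: eq_bigr => j _; rewrite linearZ -deriveE // mxE mulrC.
Qed.

Lemma is_derive_line_grad (f : 'rV[R]_d -> R) :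
  (forall y, differentiable f y) -> forall (x v : 'rV[R]_d) (t : R),
  is_derive t (1 : R) (fun s => f (x + s *: v)) (dotmx (grad f (x + t *: v)) v).
Proof.
move=> df x v t; rewrite -derive_grad //.
exact: is_derive_line (diff_derivable (df _)).
Qed.

Lemma is_derive_line_hess (f : 'rV[R]_d -> R) :
  (forall y, differentiable (grad f) y) -> forall (x v : 'rV[R]_d) (t : R),
  is_derive t (1 : R) (fun s => dotmx (grad f (x + s *: v)) v)
    ((v *m hess f (x + t *: v) *m v^T) 0 0).
Proof.
move=> dg x v t; pose gj (j : 'I_d) y := grad f y 0 j.
have dgj j y : differentiable (gj j) y.
  exact: differentiable_comp (dg y) (differentiable_coord _ 0 j).
have -> : (fun s => dotmx (grad f (x + s *: v)) v) =
          \sum_(j < d) (fun s => v 0 j *: gj j (x + s *: v)).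
  apply/funext => s; rewrite /dotmx big_ord1 fct_sumE.
  by apply: eq_bigr => j _; rewrite /GRing.scale /= mulrC.
have := is_derive_sum (fun j => is_deriveZ (v 0 j)
  (is_derive_line (diff_derivable (v := v) (dgj j (x + t *: v))))).
congr is_derive; rewrite !mxE.
under [RHS]eq_bigr => j _ do rewrite !mxE big_distrl.
rewrite [RHS]exchange_big; apply: eq_bigr => i _ /=.
rewrite derive_grad // /dotmx big_ord1 /GRing.scale /= mulr_sumr.
by apply: eq_bigr => j _; rewrite !mxE mulrA.
Qed.

Definition quadratic_bounds (mu L : R) (f : 'rV[R]_d -> R)
    (g : 'rV[R]_d -> 'rV[R]_d) :=
  forall x v,
    f x + dotmx (g x) v + mu * enorm v ^+ 2 / 2 <= f (x + v) /\
    f (x + v) <= f x + dotmx (g x) v + L * enorm v ^+ 2 / 2.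

Lemma assumptionA1_quadratic_bounds mu L (f : 'rV[R]_d -> R) :
  assumptionA1 mu L f -> quadratic_bounds mu L f (grad f).
Proof.
case=> _ _ df dg hess_bounds x v.
have D1 := is_derive_line_grad df x v; have D2 := is_derive_line_hess dg x v.
split.
- have := taylor2_ge D1 D2 (fun t => (hess_bounds _ v).1).
  by rewrite scale0r scale1r addr0.
- have := taylor2_le D1 D2 (fun t => (hess_bounds _ v).2).
  by rewrite scale0r scale1r addr0.
Qed.

End Expansion.

Section QuadraticBoundsTheory.
Variables (R : realType) (d : nat) (mu L : R).
Variables (f : 'rV[R]_d -> R) (g : 'rV[R]_d -> 'rV[R]_d).
Hypotheses (mu_gt0 : 0 < mu) (mu_le_L : mu <= L).
Hypothesis fg : quadratic_bounds mu L f g.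

Let L_gt0 : 0 < L. Proof. exact: lt_le_trans mu_le_L. Qed.

Lemma min_grad_eq0 p : (forall y, f p <= f y) -> g p = 0.
Proof.
move=> pmin; apply: dotmx_eq0.
have [_ +] := fg p (- L^-1 *: g p).
move=> /(le_trans (pmin _)); rewrite dotmxZr enorm_sqrZ enorm_sqr sqrrN.
have := dotmx_ge0 (g p); set q := dotmx _ _ => q_ge0.
have -> : L * (L^-1 ^+ 2 * q) / 2 = L^-1 * q / 2 by field; rewrite gt_eqF.
move=> h; have : L^-1 * q <= 0 by lra.
by rewrite pmulr_rle0 ?invr_gt0 // => q_le0; apply/eqP; rewrite eq_le q_le0.
Qed.

Lemma min_uniq p : (forall y, f p <= f y) -> forall y, f y <= f p -> y = p.
Proof.
move=> pmin y fy; have [+ _] := fg p (y - p).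
rewrite min_grad_eq0 // dotmx0l addr0 subrKC enorm_sqr => /le_trans/(_ fy) h.
have : mu * dotmx (y - p) (y - p) <= 0 by lra.
rewrite pmulr_rle0 // => sq_le0; apply/eqP; rewrite -subr_eq0; apply/eqP/dotmx_eq0.
by apply/eqP; rewrite eq_le sq_le0 dotmx_ge0.
Qed.

(* Evaluate the upper bound at [y] and the lower bound at [x] in the point
   [y - (g y - g x) / L]. *)
Lemma grad_cocoercive x y :
  f x + dotmx (g x) (y - x) + enorm (g y - g x) ^+ 2 / (2 * L) <= f y.
Proof.
set q := g y - g x; pose u := L^-1 *: q.
have [_ upper] := fg y (- u).
have [lower _] := fg x (y - u - x).
rewrite subrKC in lower.
have mu_term_ge0 : 0 <= mu * enorm (y - u - x) ^+ 2 / 2.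
  by rewrite mulr_ge0 ?invr_ge0 ?ler0n // mulr_ge0 ?exprn_ge0 ?enorm_ge0 // ltW.
have dot_lower : dotmx (g x) (y - u - x) = dotmx (g x) (y - x) - dotmx (g x) u.
  by rewrite !dotmxBr; ring.
have dot_upper : dotmx (g y) u - dotmx (g x) u = enorm q ^+ 2 / L.
  by rewrite -dotmxBl -/q /u dotmxZr enorm_sqr mulrC.
have sqr_u : L * enorm (- u) ^+ 2 / 2 = enorm q ^+ 2 / (2 * L).
  by rewrite enormN enorm_sqrZ; field; rewrite gt_eqF.
have half : enorm q ^+ 2 / L = 2 * (enorm q ^+ 2 / (2 * L)).
  by field; rewrite gt_eqF.
rewrite dot_lower in lower; rewrite dotmxNr sqr_u in upper.
lra.
Qed.

Lemma enorm_grad_le_dist_min p :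
  (forall y, f p <= f y) -> forall x, enorm (g x) <= L * enorm (x - p).
Proof.
move=> pmin x; have gp0 := min_grad_eq0 pmin.
have c1 := grad_cocoercive p x; have c2 := grad_cocoercive x p.
rewrite gp0 dotmx0l subr0 addr0 in c1.
rewrite gp0 sub0r enormN -opprB dotmxNr in c2.
have cs := dotmx_le (g x) (x - p).
set e := enorm (g x) in c1 c2 cs *; set E := enorm (x - p) in cs *.
have e_ge0 : 0 <= e := enorm_ge0 _.
have half : e ^+ 2 / L = 2 * (e ^+ 2 / (2 * L)) by field; rewrite gt_eqF.
have : e ^+ 2 <= L * (e * E) by rewrite -ler_pdivrMl // mulrC; lra.
have [->|e_neq0] := eqVneq e 0; first by rewrite mulr_ge0 ?enorm_ge0 // ltW.
have e_gt0 : 0 < e by rewrite lt_def e_neq0.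
by rewrite mulrCA expr2 ler_pM2l.
Qed.

Lemma sublevel_dist_le x y : f y <= f x -> mu * enorm (y - x) <= 2 * enorm (g x).
Proof.
move=> fy; have [+ _] := fg x (y - x).
rewrite subrKC => /le_trans/(_ fy) h.
have cs := dotmx_le (- g x) (y - x); rewrite dotmxNl enormN in cs.
set e := enorm (y - x) in h cs *; set G := enorm (g x) in cs *.
have : e * (mu * e) <= e * (2 * G) by lra.
have [->|e_neq0] := eqVneq e 0; first by rewrite mulr0 mulr_ge0 ?enorm_ge0.
by rewrite ler_pM2l // lt_def e_neq0 enorm_ge0.
Qed.

Lemma exists_minimizer : continuous f -> exists p, forall y, f p <= f y.
Proof.
move=> cf; pose A := [set y | f y <= f 0].
have closedA : closed A := (continuous_closedP f).1 cf _ (@closed_le _ (f 0)).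
have A_le y : A y -> `|y| <= 2 * enorm (g 0) / mu.
  move=> Ay; apply: le_trans (normr_le_enorm _) _.
  by rewrite ler_pdivlMr // mulrC -[y]subr0 sublevel_dist_le.
have boundedA : bounded_set A.
  apply: filterS (nbhs_pinfty_ge (num_real (2 * enorm (g 0) / mu))).
  by move=> M le_M y /A_le /le_trans; apply.
have A0 : A !=set0 by exists 0; rewrite /A /=.
have [c Ac cmin] := EVT_min_rV A0 (bounded_closed_compact boundedA closedA)
  (continuous_subspaceT cf).
exists c => y; have [Ay|] := lerP (f y) (f 0); first by apply: cmin; rewrite inE.
by move=> /ltW; apply: le_trans; move: Ac; rewrite inE.
Qed.

End QuadraticBoundsTheory.

Lemma quadratic_bounds_wsum (R : realType) d n (mu L : R) (w : 'I_n -> R)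
    (F : 'I_n -> 'rV[R]_d -> R) (G : 'I_n -> 'rV[R]_d -> 'rV[R]_d) :
  in_simplex w -> (forall i, quadratic_bounds mu L (F i) (G i)) ->
  quadratic_bounds mu L (fun x => \sum_(i < n) w i * F i x)
                        (fun x => \sum_(i < n) w i *: G i x).
Proof.
case=> w_ge0 w_sum1 FG x v.
have -> : dotmx (\sum_i w i *: G i x) v = \sum_i w i * dotmx (G i x) v.
  rewrite (big_morph (fun A => dotmx A v) (fun A B => dotmxDl A B v) (dotmx0l v)).
  by apply: eq_bigr => i _; rewrite dotmxZl.
have wsumE c : \sum_i w i * F i x + \sum_i w i * dotmx (G i x) v + c =
               \sum_i w i * (F i x + dotmx (G i x) v + c).
  rewrite -big_split -[c in LHS]mul1r -w_sum1 mulr_suml -big_split /=.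
  by apply: eq_bigr => i _; rewrite !mulrDr.
rewrite !wsumE; split; apply: ler_sum => i _; apply: ler_wpM2l => //;
  by have [] := FG i x v.
Qed.

Lemma pareto_optimal_dominated_eq (R : realType) n d
    (F : 'I_n -> 'rV[R]_d -> R) x :
  (forall y, (forall i, F i y <= F i x) -> y = x) -> pareto_optimal F x.
Proof. by move=> dom_eq [y [Fy [j]]]; rewrite (dom_eq y Fy) ltxx. Qed.

Lemma norm12_trmx_le (R : realType) n d (A : 'M[R]_(n, d)) (c : \bar R) :
  (forall k, (enorm (row k A))%:E <= c)%E -> (norm12 A^T <= c)%E.
Proof.
move=> A_le; apply/ereal_supP => _ [z /= z1 <-].
have -> : A^T *m z = (\sum_k z k 0 *: row k A)^T.
  rewrite -[LHS]trmxK trmx_mul trmxK mulmx_sum_row.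
  by congr (_^T); apply: eq_bigr => k _; rewrite mxE.
rewrite enorm_trmx; case: c A_le => [r| |] A_le; last 2 first.
- by rewrite leey.
- case: n A z z1 A_le => [|n] A z; last by move=> _ /(_ ord0).
  by rewrite /l1norm big_ord0 => /eqP; rewrite eq_sym oner_eq0.
rewrite lee_fin; apply: le_trans (enorm_sum_le _ _) _.
rewrite -[r]mul1r -z1 /l1norm mulr_suml; apply: ler_sum => k _.
by rewrite ler_wpM2l // -lee_fin.
Qed.

Theorem lemma10 (R : realType) (n d : nat) (mu L : R)
  (F : 'I_n -> 'rV[R]_d -> R)
  (hA1 : forall i, assumptionA1 mu L (F i))
  (beta : 'I_n -> R) (hbeta : in_simplex beta)
  (xb : 'rV[R]_d)
  (hxb : forall x, \sum_(i < n) beta i * F i xb <= \sum_(i < n) beta i * F i x) :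
  (norm12 (jac F xb)^T <= L%:E * diam (pareto_set F))%E.
Proof.
apply: norm12_trmx_le => k.
have [mu_gt0 mu_le_L df _ _] := hA1 k.
have FG i := assumptionA1_quadratic_bounds (hA1 i).
have [beta_ge0 _] := hbeta.
have xb_pareto : pareto_optimal F xb.
  apply: pareto_optimal_dominated_eq => y Fy.
  apply: (min_uniq mu_gt0 mu_le_L (quadratic_bounds_wsum hbeta FG) hxb).
  by apply: ler_sum => i _; rewrite ler_wpM2l ?beta_ge0.
have [p pmin] := exists_minimizer mu_gt0 (FG k)
  (fun x => differentiable_continuous (df x)).
have p_pareto : pareto_optimal F p.
  apply: pareto_optimal_dominated_eq => y Fy.
  exact: (min_uniq mu_gt0 mu_le_L (FG k) pmin (Fy k)).
have -> : row k (jac F xb) = grad (F k) xb by apply/rowP => j; rewrite !mxE.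
apply: (@le_trans _ _ (L * enorm (xb - p))%:E).
  by rewrite lee_fin (enorm_grad_le_dist_min mu_gt0 mu_le_L (FG k) pmin xb).
rewrite EFinM; apply: lee_wpmul2l.
  by rewrite lee_fin (ltW (lt_le_trans mu_gt0 mu_le_L)).
by apply: ereal_sup_ubound; exists xb, p.
Qed.
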